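(* A simply laced (unitary) quiver admits a single unique Coulomb branch: the Coulomb branch computed by the monopole formula does not depend on the choice of node at which the residual center-of-mass $U(1)$ is ungauged.
   Context: Consider a $3d~\mathcal N=4$ quiver gauge theory whose quiver consists solely of unitary gauge nodes $U(N_i)$ (no flavor nodes). To compute its Coulomb branch via the monopole formula (Hilbert series), one must ungauge (decouple) a residual center-of-mass $U(1)$ symmetry, which is done by choosing a node and setting one of the magnetic charges at that node to zero (introducing a delta function on one component of the magnetic flux there); this choice is called the ungauging scheme. In the conformal dimension, the hypermultiplet contribution of an edge between nodes with magnetic fluxes $m^{(1)}, m^{(2)}$ is $\frac12\sum_{j,k}|\lambda m^{(1)}_j - m^{(2)}_k|$, with $\lambda=1$ for simply laced edges. A quiver is simply laced if all its edges are single edges (multiplicity $1$). *)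

From HB Require Import structures.
From mathcomp Require Import all_boot all_order all_algebra.
From mathcomp Require Import all_classical all_reals.
From mathcomp Require Import ereal esum exp.
Set Implicit Arguments. Unset Strict Implicit. Unset Printing Implicit Defensive.
Import Order.TTheory GRing.Theory Num.Theory.
Local Open Scope ring_scope.

(* A simply laced unitary quiver without flavour nodes is given by
   - a finite type of gauge nodes I,
   - ranks N : I -> nat (node i carries U(N i)),
   - an adjacency relation adj : rel I, assumed symmetric and irreflexive
     (every edge is a single, simply laced edge, lambda = 1).

   Magnetic charges: one integer per gauge component, i.e. per element of
   the finite type  gauge_comp N = {i : I & 'I_(N i)} ;  (Tagged _ j) is the j-th
   component of the flux m^(i) at node i. *)

Definition gauge_comp (I : finType) (N : I -> nat) : finType := {i : I & 'I_(N i)}.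

Definition flux (I : finType) (N : I -> nat) (m : {ffun gauge_comp N -> int})
  (i : I) (j : 'I_(N i)) : int :=
  m (Tagged (fun i => 'I_(N i)) j).
Arguments flux {I N} m i j.

Definition weyl_chamber (I : finType) (N : I -> nat) (m : {ffun gauge_comp N -> int})
  : Prop :=
  forall (i : I) (j k : 'I_(N i)), (j <= k)%N -> flux m i k <= flux m i j.

(* The sum over unordered edges {a,b} is written as 1/2 of the sum over
   ordered pairs (a,b) with adj a b (adj symmetric, irreflexive). *)
Definition conf_dim (R : realType) (I : finType) (N : I -> nat) (adj : rel I)
  (m : {ffun gauge_comp N -> int}) : R :=
  - (\sum_(i : I) \sum_(j : 'I_(N i)) \sum_(k : 'I_(N i) | (j < k)%N)
        (`|flux m i j - flux m i k|)%:~R)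
  + 2^-1 * (2^-1 * \sum_(a : I) \sum_(b : I | adj a b)
        \sum_(j : 'I_(N a)) \sum_(k : 'I_(N b))
           (`|flux m a j - flux m b k|)%:~R).

(* Dressing factor of U(N) at node i: the residual gauge group is
   prod_blocks U(lambda_b), lambda_b the multiplicity of each distinct flux
   value, and P_{U(lambda)}(t) = prod_{l=1}^{lambda} 1/(1 - t^(2l)). *)
Definition dressing (R : realType) (I : finType) (N : I -> nat)
  (m : {ffun gauge_comp N -> int}) (t : R) : R :=
  \prod_(i : I)
    let vals := [seq flux m i j | j <- enum 'I_(N i)] in
    \prod_(v <- undup vals)
      \prod_(1 <= l < (count_mem v vals).+1) (1 - t ^+ (2 * l))^-1.

(* Monopole formula with ungauging scheme v0 = (node i0, component j0):
   HS(t) = sum_{m in Weyl chamber, m^(i0)_(j0) = 0} t^(2 Delta(m)) P(t;m),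
   evaluated at a real 0 < t < 1 as a (possibly infinite) sum of
   non-negative terms in the extended reals. *)
Definition hilbert_series (R : realType) (I : finType) (N : I -> nat)
  (adj : rel I) (v0 : gauge_comp N) (t : R) : \bar R :=
  esum [set m : {ffun gauge_comp N -> int} | weyl_chamber m /\ m v0 = 0]
       (fun m => ((t `^ (2 * @conf_dim R I N adj m)) * @dressing R I N m t)%:E).

From HB Require Import structures.
From mathcomp Require Import all_boot all_order all_algebra.
From mathcomp Require Import all_classical all_reals.
From mathcomp Require Import ereal esum exp.
Import Order.TTheory GRing.Theory Num.Theory.
Set Implicit Arguments.
Unset Strict Implicit.
Unset Printing Implicit Defensive.
Local Open Scope ring_scope.

(* For a simply laced quiver (lambda = 1) the conformal dimension only sees
   differences m_j - m_k of magnetic charges, and the dressing factor only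
   sees which charges at a node coincide; so the summand of the monopole
   formula is invariant under the diagonal shift m |-> m + c.  Shifting by
   -m(v2) maps the charges ungauged at v1 bijectively onto those ungauged at
   v2, the inverse being the shift by -m(v1), and reindexing the sum proves
   the claim. *)

Section DiagonalShift.

Variables (I : finType) (N : I -> nat).
Implicit Types (m : {ffun gauge_comp N -> int}) (c : int).

Definition shift_flux m c : {ffun gauge_comp N -> int} := [ffun x => m x + c].

Lemma shift_fluxE m c x : shift_flux m c x = m x + c.
Proof. exact: ffunE. Qed.

Lemma shift_fluxK m c : shift_flux (shift_flux m c) (- c) = m.
Proof. by apply/ffunP => x; rewrite !shift_fluxE addrK. Qed.

Lemma flux_shift m c i j : flux (shift_flux m c) i j = flux m i j + c.
Proof. exact: shift_fluxE. Qed.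

Lemma flux_shiftB m c a j b k :
  flux (shift_flux m c) a j - flux (shift_flux m c) b k = flux m a j - flux m b k.
Proof. by rewrite !flux_shift [flux m b k + c]addrC addrKA. Qed.

Lemma weyl_chamber_shift m c : weyl_chamber (shift_flux m c) <-> weyl_chamber m.
Proof.
by split=> W i j k le_jk; have := W i j k le_jk; rewrite ?flux_shift ?lerD2r.
Qed.

Lemma conf_dim_shift (R : realType) (adj : rel I) m c :
  conf_dim R adj (shift_flux m c) = conf_dim R adj m.
Proof.
rewrite /conf_dim; congr (- _ + 2^-1 * (2^-1 * _)).
  by apply: eq_bigr => i _; apply: eq_bigr => j _; apply: eq_bigr => k _;
     rewrite flux_shiftB.
apply: eq_bigr => a _; apply: eq_bigr => b _; apply: eq_bigr => j _.
by apply: eq_bigr => k _; rewrite flux_shiftB.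
Qed.

Lemma dressing_shift (R : realType) m c (t : R) :
  dressing (shift_flux m c) t = dressing m t.
Proof.
rewrite /dressing; apply: eq_bigr => i _ /=.
have addcI : injective (fun x : int => x + c) by exact: addIr.
set vals := [seq flux m i j | j <- _].
have -> : [seq flux (shift_flux m c) i j | j <- enum 'I_(N i)] =
          [seq x + c | x <- vals].
  by rewrite /vals; elim: (enum _) => //= j s ->; rewrite flux_shift.
rewrite (undup_map_inj addcI) big_map; apply: eq_bigr => v _.
rewrite count_map (@eq_count _ _ (pred1 v)) // => w /=.
by rewrite (inj_eq addcI).
Qed.

Definition regauge (v : gauge_comp N) m := shift_flux m (- m v).

Lemma regauge_eq0 v m : regauge v m v = 0.
Proof. by rewrite shift_fluxE subrr. Qed.

Lemma regaugeK v w m : m w = 0 -> regauge w (regauge v m) = m.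
Proof. by move=> mw0; rewrite /regauge shift_fluxE mw0 add0r shift_fluxK. Qed.

Lemma esum_regauge (R : realType) (P : {ffun gauge_comp N -> int} -> Prop)
    (F : {ffun gauge_comp N -> int} -> \bar R) (v1 v2 : gauge_comp N) :
  (forall m c, P (shift_flux m c) <-> P m) ->
  (forall m c, F (shift_flux m c) = F m) ->
  \esum_(m in [set m | P m /\ m v1 = 0]) F m =
  \esum_(m in [set m | P m /\ m v2 = 0]) F m.
Proof.
move=> P_shift F_shift.
rewrite [RHS](reindex_esum [set m | P m /\ m v1 = 0] _ (regauge v2)); last split.
- by apply: eq_esum => m _; rewrite F_shift.
- by move=> m [Pm _]; split; [apply/P_shift | apply: regauge_eq0].
- move=> m1 m2 /set_mem[_ m1v1] /set_mem[_ m2v1] eq_m12.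
  by rewrite -(regaugeK v2 m1v1) eq_m12 regaugeK.
- move=> m [Pm mv2]; exists (regauge v1 m); last exact: regaugeK.
  by split; [apply/P_shift | apply: regauge_eq0].
Qed.

End DiagonalShift.

Theorem claim2 (R : realType) (I : finType) (N : I -> nat) (adj : rel I)
  (adj_sym : symmetric adj) (adj_irr : irreflexive adj)
  (v1 v2 : gauge_comp N) (t : R) :
  0 < t < 1 ->
  @hilbert_series R I N adj v1 t = hilbert_series adj v2 t.
Proof.
(* The summands agree termwise. *)
move=> _; apply: esum_regauge => [m c | m c].
  exact: weyl_chamber_shift.
by rewrite conf_dim_shift dressing_shift.
Qed.
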